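(* Let $p\in(0,1)$, $N=1/(1-p)$, $r\ge0$ an integer and $n\ge0$ even. If $G=(U,w,w')$ is a melonic graph of order $n$, then $$\mathcal A_r(G)\le 4^{n}\,p^{r/2}.$$
   Context: Trees. A 2-rooted ternary tree of order $n$ is a finite plane tree $U$ with a root vertex of degree 2 and $n$ true vertices of degree 4; each edge is internal or a leaf (half-edge). Each true vertex $v$ has parent edge $e_1(v)$ (towards the root) and ordered children edges $e_2(v),e_3(v),e_4(v)$. One root edge has type $\alpha$, the other $\bar\alpha$; if $e_1(v)$ has type $\tau$ then $e_2(v)$ has the other type and $e_3(v),e_4(v)$ have type $\tau$. Leaves of type $\alpha$ are leaves, of type $\bar\alpha$ anti-leaves ($n+1$ each). A heap-ordering labels true vertices bijectively by $\{1,\dots,n\}$, increasing from parent to child. Graphs. For even $n$, a graph of order $n$ is $G=(U,w,w')$: $U$ heap-ordered; $w$ a bijection leaves $\to$ anti-leaves (dashed edges; internal edges are solid); $w'$ a partition of true vertices into $n/2$ pairs (wavy edges) with, for each pair $\{v,v'\}$ ($v$ of smaller label), one of eight propagators in $(S,j,k)=(S_v,j_v,k_v)$, $(S',j',k')=(S_{v'},j_{v'},k_{v'})$: $\delta_{jj'}\delta_{kk'}$, $\delta_{j,S-j'}\delta_{kk'}$, $\delta_{jj'}\delta_{k,S-k'}$, $\delta_{j,S-j'}\delta_{k,S-k'}$, $\delta_{jk'}\delta_{kj'}$, $\delta_{j,S-k'}\delta_{kj'}$, $\delta_{jk'}\delta_{k,S-j'}$, $\delta_{j,S-k'}\delta_{k,S-j'}$,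 together with $S=S'$. Amplitude. A momentum attribution gives each true vertex $S_v\ge0$, $0\le j_v,k_v\le S_v$ and momenta $j_v,S_v-j_v,k_v,S_v-k_v$ to the ends at $v$ of $e_1,\dots,e_4$. It is admissible (for root momentum $r$) if solid edges get equal momenta at both ends, both root edges carry momentum $r$, every dashed edge $e$ joins leaves of equal momentum $m(e)$, and every wavy edge satisfies $S_v=S_{v'}$ and its propagator. $\mathcal A_r(G):=N^{-n}\sum_{\text{admissible}}\prod_{e\text{ dashed}}p^{m(e)}$. Melonic graphs. Each propagator (with $S=S'$) induces a bijection from the edge-ends at $v$ to those at $v'$ (matching identified momenta). For two true vertices joined by three edges, the leading propagator is the one whose bijection maps the $v$-end of each joining edge to its $v'$-end. The trivial graph ($n=0$) is the root with a leaf and an anti-leaf joined by a dashed edge. A graph is melonic if (ignoring heap-orderings) it arises from the trivial graph by repeatedly inserting two new true vertices $v,v'$, joined to each other by three edges and by a wavy edge carrying the leading propagator, in one of these ways: (I) into a dashed edge $\{x,y\}$: $e_1(v)$ at $x$, $e_1(v')$ at $y$, dashed edges $e_2(v)$–$e_2(v')$ and $\{e_3(v),e_4(v)\}$ bijectively to $\{e_3(v'),e_4(v')\}$; (II) into a dashed edge $\{z,z'\}$: $e_1(v)$ at $z$, $e_1(v')=e_2(v)$, dashed edges $e_2(v')$–$z'$ and $\{e_3(v),e_4(v)\}$ bijectively to $\{e_3(v'),e_4(v')\}$; (III) into a dashed edge $\{z,z'\}$: $e_1(v)$ at $z$, $e_1(v')=e_a(v)$ ($a\in\{3,4\}$, $b$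 the other), dashed edges $e_2(v)$–(one of $e_3(v'),e_4(v')$), $e_b(v)$–$e_2(v')$, remaining child leaf of $v'$–$z'$; (IIs) into a solid edge from $u$ to child $z$: $v$ below $u$, $e_1(v')=e_2(v)$, $e_1(z)=e_2(v')$, dashed edges $\{e_3(v),e_4(v)\}$ bijectively to $\{e_3(v'),e_4(v')\}$; (IIIs) as (IIs) but $e_1(v')=e_a(v)$, $a\in\{3,4\}$, $e_1(z)=e_c(v')$, $c\in\{3,4\}$, dashed edges $e_2(v)$–(other of $e_3(v'),e_4(v')$) and $e_b(v)$–$e_2(v')$. *)

From HB Require Import structures.
From mathcomp Require Import all_boot all_order all_algebra.
From mathcomp Require Import all_classical all_reals all_analysis.

Set Implicit Arguments.
Unset Strict Implicit.
Unset Printing Implicit Defensive.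

Import Order.TTheory GRing.Theory Num.Theory.

(* A slot is the position of an edge seen from
   the vertex closer to the root:
     inl b      : a root edge; b = true is the root edge of type alpha,
                  b = false the root edge of type alpha-bar;
     inr (u, c) : the child edge e_{c+2}(u) of the true vertex u
                  (c = 0 : e_2, c = 1 : e_3, c = 2 : e_4).
   Every slot is either occupied by the parent edge e_1 of exactly one true
   vertex (internal / solid edge), or free (a leaf half-edge).              *)
Definition slot (V : finType) : finType := (bool + V * 'I_3)%type.

Inductive prop8 := P1 | P2 | P3 | P4 | P5 | P6 | P7 | P8.

(* Propagator constraint between (S,j,k) (the unprimed vertex) and
   (S',j',k') (the primed vertex), including S = S'. *)
Definition prop_holds (P : prop8) (a b : nat * nat * nat) : Prop :=
  let: (s0, j, k) := a in let: (s1, j', k') := b in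
  s0 = s1 /\
  match P with
  | P1 => j = j' /\ k = k'
  | P2 => j = s0 - j' /\ k = k'
  | P3 => j = j' /\ k = s0 - k'
  | P4 => j = s0 - j' /\ k = s0 - k'
  | P5 => j = k' /\ k = j'
  | P6 => j = s0 - k' /\ k = j'
  | P7 => j = k' /\ k = s0 - j'
  | P8 => j = s0 - k' /\ k = s0 - j'
  end.

(* The same propagator read with the roles of the two vertices exchanged. *)
Definition swapP (P : prop8) : prop8 :=
  match P with P6 => P7 | P7 => P6 | Q => Q end.

(* Bijection induced by a propagator from edge-ends at v (1..4 for
   e_1..e_4, carrying momenta j, S-j, k, S-k) to edge-ends at v'. *)
Definition bij (P : prop8) (e : nat) : nat :=
  match P, e with
  | P1, _ => e
  | P2, 1 => 2 | P2, 2 => 1 | P2, _ => e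
  | P3, 3 => 4 | P3, 4 => 3 | P3, _ => e
  | P4, 1 => 2 | P4, 2 => 1 | P4, 3 => 4 | P4, _ => 3
  | P5, 1 => 3 | P5, 2 => 4 | P5, 3 => 1 | P5, _ => 2
  | P6, 1 => 4 | P6, 2 => 3 | P6, 3 => 1 | P6, _ => 2
  | P7, 1 => 3 | P7, 2 => 4 | P7, 3 => 2 | P7, _ => 1
  | P8, 1 => 4 | P8, 2 => 3 | P8, 3 => 2 | P8, _ => 1
  end.

(* P is the leading propagator for the joining edges [joins], each given as
   (end index at v, end index at v'). *)
Definition leading (P : prop8) (joins : seq (nat * nat)) : Prop :=
  forall a b, (a, b) \in joins -> bij P a = b.

(* Graph data on a finite set V of true vertices.
   par v  : the slot occupied by the parent edge e_1(v);
   ty v   : the type of v, i.e. of e_1(v) (true = alpha);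
   dash   : the dashed edges, as a matching of free slots (meaningful on
            free slots only): dash s is the other end of the dashed edge at s;
   wav v  : the partner of v for the wavy edges;
   prop v : the propagator on the wavy edge {v, wav v}, read with v as the
            unprimed vertex (S,j,k) and wav v as the primed one.           *)
Record gdata (V : finType) := GData {
  par : V -> slot V;
  ty : V -> bool;
  dash : slot V -> slot V;
  wav : V -> V;
  prop : V -> prop8 }.

Section Basics.
Variable V : finType.
Implicit Types (G : gdata V) (s : slot V) (v : V).

Definition slot_ty G s : bool :=
  match s with
  | inl b => b
  | inr (u, c) => if val c == 0%N then ~~ ty G u else ty G u
  end.

Definition free G s : bool := [forall v, par G v != s].
Definition is_leaf G s : bool := free G s && slot_ty G s.
Definition is_antileaf G s : bool := free G s && ~~ slot_ty G s.

(* G is a graph: the parent relation defines a plane tree (injective parent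
   slots, no cycles), types follow the typing rule, dashed edges form a
   bijection leaves -> anti-leaves (stored as a matching of free slots with
   opposite types), wavy edges form a perfect matching of true vertices and
   the propagator of a wavy edge is well defined (independent of which end
   is read as unprimed). *)
Definition wf G : Prop :=
  [/\ injective (par G),
      exists rank : V -> nat, forall v u c, par G v = inr (u, c) -> rank u < rank v,
      (forall v, ty G v = slot_ty G (par G v)),
      (forall s, free G s ->
         [/\ free G (dash G s), slot_ty G (dash G s) = ~~ slot_ty G s
           & dash G (dash G s) = s])
    & (forall v, [/\ wav G (wav G v) = v, wav G v != v
                   & prop G (wav G v) = swapP (prop G v)])].

Definition att := {ffun V -> nat * nat * nat}.
Definition mS (x : att) v := (x v).1.1.
Definition mj (x : att) v := (x v).1.2.
Definition mk (x : att) v := (x v).2.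

(* momentum at the end at v of e_e(v), e = 1..4 *)
Definition mom_end (x : att) v (e : nat) : nat :=
  match e with
  | 1 => mj x v
  | 2 => mS x v - mj x v
  | 3 => mk x v
  | _ => mS x v - mk x v
  end.

Definition slot_mom (r : nat) (x : att) s : nat :=
  match s with
  | inl _ => r
  | inr (u, c) => mom_end x u (val c + 2)
  end.

Definition admissible G (r : nat) (x : att) : Prop :=
  [/\ (forall v, mj x v <= mS x v /\ mk x v <= mS x v),
      (forall v, mom_end x v 1 = slot_mom r x (par G v)),
      (forall s, is_leaf G s -> slot_mom r x s = slot_mom r x (dash G s))
    & (forall v, prop_holds (prop G v) (x v) (x (wav G v)))].

End Basics.

Local Open Scope ring_scope.

(* product over dashed edges (each indexed by its leaf end) of p^{m(e)} *)
Definition weight (R : realType) (p : R) (V : finType) (G : gdata V)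
    (r : nat) (x : att V) : R :=
  \prod_(s : slot V | is_leaf G s) p ^+ slot_mom r x s.

Definition amplitude (R : realType) (p : R) (V : finType) (G : gdata V)
    (r : nat) : \bar R :=
  (((1 - p)^-1) ^- #|V|)%:E *
  (\esum_(x in [set x : att V | admissible G r x]) (weight p G r x)%:E)%E.

Local Close Scope ring_scope.

Definition heap (n : nat) (G : gdata 'I_n) : Prop :=
  forall (v u : 'I_n) (c : 'I_3), par G v = inr (u, c) -> (u < v)%N.

(* Melonic graphs.  Insertions produce a graph on V + bool, where
   inr false is the new vertex v and inr true the new vertex v'.           *)
Section Insertion.
Variable V : finType.
Implicit Types (G : gdata V).

Definition nv : V + bool := inr false.
Definition nv' : V + bool := inr true.

Definition liftS (s : slot V) : slot (V + bool)%type :=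
  match s with inl b => inl b | inr (u, c) => inr (inl u, c) end.

Definition ch (x : V + bool) (i : nat) : slot (V + bool)%type := inr (x, inord i).

Fixpoint pair_lookup (ps : seq (slot (V + bool)%type * slot (V + bool)%type))
    (s : slot (V + bool)%type) : option (slot (V + bool)%type) :=
  match ps with
  | [::] => None
  | (a, b) :: ps' =>
      if s == a then Some b else if s == b then Some a else pair_lookup ps' s
  end.

(* generic insertion: new vertices v, v' with parent slots pv, pv' and types
   tv, tv'; optionally old vertex z gets the new parent slot sz; the new
   dashed edges are [pairs] (overriding old ones); other old dashed edges are
   kept; the new wavy edge {v, v'} carries P (read from v). *)
Definition mkIns G (pv pv' : slot (V + bool)%type) (tv tv' : bool)
    (oz : option (V * slot (V + bool)%type))
    (pairs : seq (slot (V + bool)%type * slot (V + bool)%type)) (P : prop8)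
    : gdata (V + bool)%type :=
  {| par := fun y => match y with
        | inl u => match oz with
                   | Some (z, sz) => if u == z then sz else liftS (par G u)
                   | None => liftS (par G u)
                   end
        | inr false => pv
        | inr true => pv'
        end;
     ty := fun y => match y with
        | inl u => ty G u | inr false => tv | inr true => tv' end;
     dash := fun s => match pair_lookup pairs s with
        | Some t => t
        | None => match s with
                  | inl b => liftS (dash G (inl b))
                  | inr (inl u, c) => liftS (dash G (inr (u, c)))
                  | inr (inr _, _) => s
                  end
        end;
     wav := fun y => match y with
        | inl u => inl (wav G u) | inr false => nv' | inr true => nv end;
     prop := fun y => match y with
        | inl u => prop G u | inr false => P | inr true => swapP P end |}.

(* sigma : bijection {e3(v),e4(v)} -> {e3(v'),e4(v')} (child index 1,2);
   sw = true means e3 -> e4, e4 -> e3 *)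
Definition sig (sw : bool) (c : nat) : nat := if sw then 3 - c else c.

(* the two ends of the dashed edge at the free slot l; o chooses which
   end plays the role of x (resp. z) *)
Definition end1 G (l : slot V) (o : bool) := if o then l else dash G l.
Definition end2 G (l : slot V) (o : bool) := if o then dash G l else l.

Definition insI G l o sw P :=
  let x := end1 G l o in let y := end2 G l o in
  mkIns G (liftS x) (liftS y) (slot_ty G x) (slot_ty G y) None
    [:: (ch nv 0, ch nv' 0); (ch nv 1, ch nv' (sig sw 1));
        (ch nv 2, ch nv' (sig sw 2))] P.
Definition joinsI (sw : bool) :=
  [:: (2, 2); (3, (sig sw 1).+2); (4, (sig sw 2).+2)].

Definition insII G l o sw P :=
  let z := end1 G l o in let z' := end2 G l o in
  mkIns G (liftS z) (ch nv 0) (slot_ty G z) (~~ slot_ty G z) None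
    [:: (ch nv' 0, liftS z'); (ch nv 1, ch nv' (sig sw 1));
        (ch nv 2, ch nv' (sig sw 2))] P.
Definition joinsII (sw : bool) :=
  [:: (2, 1); (3, (sig sw 1).+2); (4, (sig sw 2).+2)].

(* (III): a = 3 if ab else 4 (child index ca), b the other (child index cb);
   e2(v) is joined to e_{cc+2}(v') with cc = 1 if cb' else 2 *)
Definition cA (ab : bool) : nat := if ab then 1 else 2.
Definition cB (ab : bool) : nat := if ab then 2 else 1.

Definition insIII G l o ab cb' P :=
  let z := end1 G l o in let z' := end2 G l o in
  mkIns G (liftS z) (ch nv (cA ab)) (slot_ty G z) (slot_ty G z) None
    [:: (ch nv 0, ch nv' (cA cb')); (ch nv (cB ab), ch nv' 0);
        (ch nv' (cB cb'), liftS z')] P.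
Definition joinsIII (ab cb' : bool) :=
  [:: ((cA ab).+2, 1); (2, (cA cb').+2); ((cB ab).+2, 2)].

(* (IIs): insertion into the solid edge whose child end is the vertex z *)
Definition insIIs G (z : V) sw P :=
  mkIns G (liftS (par G z)) (ch nv 0) (ty G z) (~~ ty G z)
    (Some (z, ch nv' 0))
    [:: (ch nv 1, ch nv' (sig sw 1)); (ch nv 2, ch nv' (sig sw 2))] P.
Definition joinsIIs (sw : bool) := joinsII sw.

(* (IIIs): e1(v') = e_a(v), e1(z) = e_c(v') with c = 3 if cc else 4 *)
Definition insIIIs G (z : V) ab cc P :=
  mkIns G (liftS (par G z)) (ch nv (cA ab)) (ty G z) (ty G z)
    (Some (z, ch nv' (cA cc)))
    [:: (ch nv 0, ch nv' (cB cc)); (ch nv (cB ab), ch nv' 0)] P.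
Definition joinsIIIs (ab cc : bool) :=
  [:: ((cA ab).+2, 1); (2, (cB cc).+2); ((cB ab).+2, 2)].

End Insertion.

Definition map_slot (V W : finType) (f : V -> W) (s : slot V) : slot W :=
  match s with inl b => inl b | inr (u, c) => inr (f u, c) end.

Definition giso (V W : finType) (f : V -> W) (G : gdata V) (H : gdata W) :=
  bijective f /\
  [/\ (forall v, par H (f v) = map_slot f (par G v)),
      (forall v, ty H (f v) = ty G v),
      (forall s, free G s -> dash H (map_slot f s) = map_slot f (dash G s)),
      (forall v, wav H (f v) = f (wav G v))
    & (forall v, prop H (f v) = prop G v)].

Definition triv_graph : gdata void :=
  {| par := fun v => of_void _ v;
     ty := fun v => of_void _ v;
     dash := fun s => match s with
                      | inl b => inl (~~ b)
                      | inr vc => of_void _ vc.1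
                      end;
     wav := fun v => of_void _ v;
     prop := fun v => of_void _ v |}.

Inductive melonic : forall V : finType, gdata V -> Prop :=
  | mel_triv : melonic triv_graph
  | mel_I (V : finType) (G : gdata V) l o sw P :
      melonic G -> free G l -> leading P (joinsI sw) ->
      melonic (insI G l o sw P)
  | mel_II (V : finType) (G : gdata V) l o sw P :
      melonic G -> free G l -> leading P (joinsII sw) ->
      melonic (insII G l o sw P)
  | mel_III (V : finType) (G : gdata V) l o ab cb' P :
      melonic G -> free G l -> leading P (joinsIII ab cb') ->
      melonic (insIII G l o ab cb' P)
  | mel_IIs (V : finType) (G : gdata V) z sw P :
      melonic G -> leading P (joinsIIs sw) ->
      melonic (insIIs G z sw P)
  | mel_IIIs (V : finType) (G : gdata V) z ab cc P :
      melonic G -> leading P (joinsIIIs ab cc) ->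
      melonic (insIIIs G z ab cc P)
  | mel_iso (V W : finType) (G : gdata V) (H : gdata W) (f : V -> W) :
      melonic G -> giso f G H -> melonic H.

From HB Require Import structures.
From mathcomp Require Import all_boot all_order all_algebra.
From mathcomp Require Import all_classical all_reals all_analysis.
From mathcomp Require Import zify.
Import Order.TTheory GRing.Theory Num.Theory.

Set Implicit Arguments.
Unset Strict Implicit.
Unset Printing Implicit Defensive.

(* Call an attribution tree-admissible if it satisfies every admissibility
   condition except those on dashed edges.  In a melonic graph some dashed
   edge {l, l'} is such that tree-admissible attributions are determined by
   the momenta of the free slots other than l and l'.  This survives every
   insertion: any three of the four momenta j, S - j, k, S - k at a vertex
   determine (S, j, k), and the propagator then determines the partner, so
   the two new vertices are recovered from the momenta of their free edges;
   when the insertion uses {l, l'} itself, one of the new dashed edges takes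
   its place.  Hence an admissible attribution is determined by the momenta
   of all leaves but one, i.e. of at most n leaves.  As the leaf momenta add
   up to at least r, with q = sqrt p the weight is at most q^r times the
   product of q^m over those leaves; summing each m independently gives at
   most (1 - q)^-n, and N^-n (1 - q)^-n = (1 + q)^n <= 2^n. *)

Definition bounded_triple (t : nat * nat * nat) : Prop :=
  t.1.2 <= t.1.1 /\ t.2 <= t.1.1.

Definition end_mom (t : nat * nat * nat) (e : nat) : nat :=
  match e with 1 => t.1.2 | 2 => t.1.1 - t.1.2 | 3 => t.2 | _ => t.1.1 - t.2 end.

Lemma mom_endE (V : finType) (x : att V) v e : mom_end x v e = end_mom (x v) e.
Proof. by case: e => [|[|[|[|e]]]]. Qed.

Lemma triple_eq_of_ends (t u : nat * nat * nat) e1 e2 e3 :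
  bounded_triple t -> bounded_triple u ->
  uniq [:: e1; e2; e3] -> all (fun e => 0 < e <= 4) [:: e1; e2; e3] ->
  end_mom t e1 = end_mom u e1 -> end_mom t e2 = end_mom u e2 ->
  end_mom t e3 = end_mom u e3 -> t = u.
Proof.
case: t u => [[s j] k] [[s' j'] k'] [/= js ks] [/= js' ks'].
by case: e1 => [|[|[|[|[|?]]]]]; case: e2 => [|[|[|[|[|?]]]]];
  case: e3 => [|[|[|[|[|?]]]]] //= _ _ *; do !congr pair; lia.
Qed.

Lemma prop_holds_det P (t u u' : nat * nat * nat) :
  prop_holds P t u -> prop_holds P t u' ->
  bounded_triple u -> bounded_triple u' -> u = u'.
Proof.
case: t u u' => [[s j] k] [[s1 j1] k1] [[s2 j2] k2] /=.
by case: P => /= -[-> [-> ->]] [<- [? ?]] [/= ? ?] [/= ? ?]; do !congr pair; lia.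
Qed.

Lemma prop_holds_S P (t u : nat * nat * nat) : prop_holds P t u -> t.1.1 = u.1.1.
Proof. by case: t u => [[? ?] ?] [[? ?] ?] /= []. Qed.

Section Determination.
Variable V : finType.
Implicit Types (G : gdata V) (s l : slot V) (x y : att V).

Definition tree_admissible G r x : Prop :=
  [/\ (forall v, bounded_triple (x v)),
      (forall v, mom_end x v 1 = slot_mom r x (par G v))
    & (forall v, prop_holds (prop G v) (x v) (x (wav G v)))].

Lemma admissible_tree G r x : admissible G r x -> tree_admissible G r x.
Proof. by case. Qed.

Definition dash_matching G : Prop := forall s, free G s ->
  [/\ free G (dash G s), dash G (dash G s) = s & dash G s != s].

Definition agree_off G r l x y : Prop := forall s, free G s ->
  s != l -> s != dash G l -> slot_mom r x s = slot_mom r y s.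

Definition determined_at G l : Prop := forall r x y,
  tree_admissible G r x -> tree_admissible G r y -> agree_off G r l x y -> x = y.

Definition determined_by_free G : Prop := exists2 l, free G l & determined_at G l.

Lemma freeP G s : reflect (forall v, par G v != s) (free G s).
Proof. exact: forallP. Qed.

Lemma dash_matching_ends G l o : dash_matching G -> free G l ->
  [/\ free G (end1 G l o), free G (end2 G l o), dash G (end1 G l o) = end2 G l o,
      dash G (end2 G l o) = end1 G l o & end1 G l o != end2 G l o].
Proof.
by move=> dG fl; have [f1 f2 f3] := dG _ fl; rewrite /end1 /end2; case: o; rewrite // eq_sym.
Qed.

End Determination.

Lemma triv_dash_matching : dash_matching triv_graph.
Proof.
by case=> [b|[[] ?]] _ /=; rewrite negbK; split=> //; [apply/forallP=> -[]|case: b].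
Qed.

Lemma triv_determined : determined_by_free triv_graph.
Proof.
by exists (inl true) => [|r x y _ _ _]; [apply/forallP=> -[]|apply/ffunP=> -[]].
Qed.

Section Isomorphism.
Variables (V W : finType) (f : V -> W) (G : gdata V) (H : gdata W).
Hypothesis iso : giso f G H.

Lemma map_slot_inj : injective (map_slot f).
Proof.
case: iso => -[g fg _] _.
by case=> [b|[u c]] [b'|[u' c']] //= [] => [->|/(can_inj fg) -> ->].
Qed.

Lemma map_slot_surj t : exists s, t = map_slot f s.
Proof.
case: iso => -[g _ gf] _.
case: t => [b|[w c]]; first by exists (inl b).
by exists (inr (g w, c)); rewrite /= gf.
Qed.

Lemma free_map_slot s : free H (map_slot f s) = free G s.
Proof.
case: iso => -[g _ gf] [hpar _ _ _ _].
apply/freeP/freeP => h v; last by rewrite -[v]gf hpar (inj_eq map_slot_inj).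
by have := h (f v); rewrite hpar (inj_eq map_slot_inj).
Qed.

Definition pull_att (x : att W) : att V := [ffun v => x (f v)].

Lemma slot_mom_map r x s : slot_mom r x (map_slot f s) = slot_mom r (pull_att x) s.
Proof. by case: s => [b|[u c]] //=; rewrite !mom_endE ffunE. Qed.

Lemma pull_tree_admissible r x :
  tree_admissible H r x -> tree_admissible G r (pull_att x).
Proof.
case: iso => _ [hpar _ _ hwav hprop] [hb hp hP]; split=> v.
- by rewrite ffunE.
- by rewrite -slot_mom_map -hpar -hp !mom_endE ffunE.
- by rewrite !ffunE -hprop -hwav.
Qed.

Lemma pull_att_inj : injective pull_att.
Proof.
case: iso => -[g _ gf] _ x y e; apply/ffunP => w; rewrite -[w]gf.
by have := congr1 (fun z : att V => z (g w)) e; rewrite !ffunE.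
Qed.

Lemma giso_dash_matching : dash_matching G -> dash_matching H.
Proof.
case: iso => _ [_ _ hdash _ _] dG t.
have [s ->] := map_slot_surj t; rewrite free_map_slot => fs.
have [f1 f2 f3] := dG s fs.
by rewrite hdash // free_map_slot hdash // f2 (inj_eq map_slot_inj).
Qed.

Lemma giso_determined : determined_by_free G -> determined_by_free H.
Proof.
case: iso => _ [_ _ hdash _ _] [l fl detG].
exists (map_slot f l) => [|r x y hx hy agr]; first by rewrite free_map_slot.
apply: pull_att_inj; apply: detG (pull_tree_admissible hx) (pull_tree_admissible hy) _.
move=> s fs nl ndl; rewrite -!slot_mom_map; apply: agr.
- by rewrite free_map_slot.
- by rewrite (inj_eq map_slot_inj).
- by rewrite hdash // (inj_eq map_slot_inj).
Qed.

End Isomorphism.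

(* Keeps child slots folded, so that the rewrite rules of [slot_simpl] apply. *)
Arguments ch : simpl never.

Section Lifting.
Variable V : finType.
Implicit Types (G : gdata V) (s : slot V) (x y : att (V + bool)%type).

Definition old_att x : att V := [ffun u => x (inl u)].

Lemma slot_mom_liftS r x s : slot_mom r x (liftS s) = slot_mom r (old_att x) s.
Proof. by case: s => [b|[u c]] //=; rewrite !mom_endE ffunE. Qed.

Lemma slot_mom_ch r x w i : i < 3 -> slot_mom r x (ch w i) = mom_end x w (i + 2).
Proof. by move=> hi; rewrite /ch /= inordK. Qed.

Lemma liftS_inj : injective (@liftS V).
Proof. by case=> [b|[u c]] [b'|[u' c']] //= [] => [->|-> ->]. Qed.

Lemma liftS_eq s t : (liftS s == liftS t) = (s == t).
Proof. exact: (inj_eq liftS_inj). Qed.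

Lemma liftS_eq_ch s b i : (liftS s == ch (inr b) i) = false.
Proof. by case: s => [b0|[u c]]. Qed.

Lemma ch_eq_liftS s b i : (ch (inr b) i == liftS s) = false.
Proof. by case: s => [b0|[u c]]. Qed.

Lemma ch_eq w w' i j : i < 3 -> j < 3 ->
  (ch w i == ch w' j :> slot (V + bool)%type) = (w == w') && (i == j).
Proof.
move=> hi hj; apply/eqP/andP => [[-> /(congr1 val)]|[/eqP -> /eqP ->]] //.
by rewrite /= !inordK // => ->.
Qed.

End Lifting.

Ltac slot_simpl := rewrite ?liftS_eq_ch ?ch_eq_liftS ?liftS_eq ?ch_eq //=.

Section Insertion.
Variable V : finType.
Implicit Types (G : gdata V) (s : slot V) (x y : att (V + bool)%type).

Lemma slot_liftS_or_ch (t : slot (V + bool)%type) :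
  (exists s, t = liftS s) \/ (exists b i, i < 3 /\ t = ch (inr b) i).
Proof.
case: t => [b|[[u|b] c]]; [by left; exists (inl b)|by left; exists (inr (u, c))|].
by right; exists b, c; split=> //; rewrite /ch inord_val.
Qed.

Lemma att_eq_old x y :
  old_att x = old_att y -> x (nv V) = y (nv V) -> x (nv' V) = y (nv' V) -> x = y.
Proof.
move=> e e1 e2; apply/ffunP => -[u|[|]] //.
by have := congr1 (fun z : att V => z u) e; rewrite !ffunE.
Qed.

Section MkIns.
Variables (G : gdata V) (pv pv' : slot (V + bool)%type) (tv tv' : bool)
  (oz : option (V * slot (V + bool)%type))
  (pairs : seq (slot (V + bool)%type * slot (V + bool)%type)) (P : prop8).
Let G' := mkIns G pv pv' tv tv' oz pairs P.

Lemma mkIns_dash_liftS s : pair_lookup pairs (liftS s) = None ->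
  dash G' (liftS s) = liftS (dash G s).
Proof. by rewrite /G' /=; case: s => [b|[u c]] /= ->. Qed.

End MkIns.

Section FreshParents.
Variables (G : gdata V) (pv pv' : slot (V + bool)%type) (tv tv' : bool)
  (pairs : seq (slot (V + bool)%type * slot (V + bool)%type)) (P : prop8).
Let G' := mkIns G pv pv' tv tv' None pairs P.

Lemma mkIns_old_tree_admissible r x : tree_admissible G' r x -> tree_admissible G r (old_att x).
Proof.
case=> hb hp hP; split=> v; rewrite ?ffunE; [exact: hb| |exact: hP (inl v)].
by rewrite -slot_mom_liftS -(hp (inl v)) !mom_endE ffunE.
Qed.

Lemma mkIns_free_liftS s :
  free G' (liftS s) = [&& free G s, pv != liftS s & pv' != liftS s].
Proof.
apply/freeP/and3P => [h|[/freeP h1 h2 h3]]; last by case=> [u|[]] //=; rewrite liftS_eq.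
split; [apply/freeP => v; rewrite -liftS_eq|..].
- exact: h (inl v).
- exact: h (nv V).
- exact: h (nv' V).
Qed.

Lemma mkIns_free_ch b i : i < 3 ->
  free G' (ch (inr b) i) = (pv != ch (inr b) i) && (pv' != ch (inr b) i).
Proof.
move=> hi; apply/freeP/andP => [h|[h2 h3]]; first by split; [exact: h (nv V)|exact: h (nv' V)].
by case=> [u|[]] //=; rewrite liftS_eq_ch.
Qed.

End FreshParents.

Section MovedParent.
Variables (G : gdata V) (z : V) (pv' sz : slot (V + bool)%type) (tv tv' : bool)
  (pairs : seq (slot (V + bool)%type * slot (V + bool)%type)) (P : prop8).
Hypotheses (pv'_new : forall s, pv' != liftS s) (sz_new : forall s, sz != liftS s).
Let G' := mkIns G (liftS (par G z)) pv' tv tv' (Some (z, sz)) pairs P.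

Lemma mkIns_moved_free_liftS s : free G' (liftS s) = free G s.
Proof.
apply/idP/idP => /freeP h; apply/freeP => u.
  case: (eqVneq u z) => [->|ne]; first by have := h (nv V); rewrite /= liftS_eq.
  by have := h (inl u); rewrite /= (negbTE ne) liftS_eq.
case: u => [u|[]] /=; [|exact: pv'_new|by rewrite liftS_eq].
by case: (u == z); [exact: sz_new|rewrite liftS_eq].
Qed.

Lemma mkIns_moved_free_ch b i : i < 3 ->
  free G' (ch (inr b) i) = (sz != ch (inr b) i) && (pv' != ch (inr b) i).
Proof.
move=> hi; apply/freeP/andP => [h|[h1 h2] [u|[]]] /=.
- by split; [have := h (inl z); rewrite /= eqxx|exact: h (nv' V)].
- by case: (u == z); rewrite ?liftS_eq_ch.
- exact: h2.
- by rewrite liftS_eq_ch.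
Qed.

Lemma mkIns_moved_old_tree_admissible r x : tree_admissible G' r x ->
  slot_mom r x sz = mj x (nv V) -> tree_admissible G r (old_att x).
Proof.
case=> hb hp hP hz; split=> v; rewrite ?ffunE; [exact: hb| |exact: hP (inl v)].
case: (eqVneq v z) => [->|ne].
  have := hp (nv V); rewrite /= slot_mom_liftS => <-.
  by have := hp (inl z); rewrite /= eqxx hz /mj ffunE.
by rewrite -slot_mom_liftS; have := hp (inl v); rewrite /= (negbTE ne) /mj ffunE.
Qed.

End MovedParent.

Section AnyGraph.
Variable G' : gdata (V + bool)%type.

Lemma att_eq_old_nv r x y : wav G' (nv V) = nv' V ->
  tree_admissible G' r x -> tree_admissible G' r y ->
  old_att x = old_att y -> x (nv V) = y (nv V) -> x = y.
Proof.
move=> wv [hx _ hPx] [hy _ hPy] e e1; apply: att_eq_old => //.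
have := hPx (nv V); have := hPy (nv V); rewrite wv e1 => hPy' hPx'.
exact: (prop_holds_det hPx' hPy').
Qed.

Lemma vertex_eq_children r x y w : tree_admissible G' r x -> tree_admissible G' r y ->
  (forall i, i < 3 -> slot_mom r x (ch w i) = slot_mom r y (ch w i)) -> x w = y w.
Proof.
move=> [hx _ _] [hy _ _] e; have := e 0 isT; have := e 1 isT; have := e 2 isT.
rewrite !slot_mom_ch // !mom_endE => e4 e3 e2.
exact: (triple_eq_of_ends (e1 := 2) (e2 := 3) (e3 := 4)).
Qed.

Lemma vertex_eq_parent_children r x y w c : c < 3 ->
  tree_admissible G' r x -> tree_admissible G' r y -> mj x w = mj y w ->
  (forall i, i < 3 -> i != c -> slot_mom r x (ch w i) = slot_mom r y (ch w i)) ->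
  x w = y w.
Proof.
move=> hc [hx _ _] [hy _ _] e1 e.
have ech i : i < 3 -> i != c -> end_mom (x w) (i + 2) = end_mom (y w) (i + 2).
  by move=> hi ic; rewrite -!mom_endE -!(slot_mom_ch r) //; apply: e.
clear e; case: c hc ech => [|[|[|]]] // _ ech.
- exact: (triple_eq_of_ends (e1 := 1) (e2 := 3) (e3 := 4) (hx w) (hy w) isT isT
    e1 (ech 1 isT isT) (ech 2 isT isT)).
- exact: (triple_eq_of_ends (e1 := 1) (e2 := 2) (e3 := 4) (hx w) (hy w) isT isT
    e1 (ech 0 isT isT) (ech 2 isT isT)).
- exact: (triple_eq_of_ends (e1 := 1) (e2 := 2) (e3 := 3) (hx w) (hy w) isT isT
    e1 (ech 0 isT isT) (ech 1 isT isT)).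
Qed.

End AnyGraph.

(* Insertions (II) and (III): v is attached at the free slot z, v' at the
   child c of v, and the child d of v' is dashed to z' = dash z. *)
Section Pendant.
Variables (G : gdata V) (G' : gdata (V + bool)%type) (z z' : slot V) (c d : nat).
Hypotheses (c_lt3 : c < 3) (d_lt3 : d < 3).
Hypotheses (dz : dash G z = z') (dz' : dash G z' = z).
Hypotheses (par_nv : par G' (nv V) = liftS z) (par_nv' : par G' (nv' V) = ch (nv V) c).
Hypothesis wav_nv : wav G' (nv V) = nv' V.
Hypothesis old_adm : forall r x, tree_admissible G' r x -> tree_admissible G r (old_att x).
Hypothesis free_liftS : forall s, free G' (liftS s) = free G s && (z != s).
Hypothesis free_ch : forall b i, i < 3 -> free G' (ch (inr b) i) = ~~ (~~ b && (i == c)).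
Hypothesis dash_liftS : forall s,
  dash G' (liftS s) = if s == z' then ch (nv' V) d else liftS (dash G s).
Hypothesis dash_ch : dash G' (ch (nv' V) d) = liftS z'.

Lemma pendant_parent_nv r a : tree_admissible G' r a -> mj a (nv V) = slot_mom r (old_att a) z.
Proof. by case=> _ hp _; rewrite -slot_mom_liftS -par_nv -(hp (nv V)). Qed.

Lemma pendant_child_nv r a : tree_admissible G' r a -> slot_mom r a (ch (nv V) c) = mj a (nv' V).
Proof. by case=> _ hp _; rewrite -par_nv' -(hp (nv' V)). Qed.

Lemma pendant_determined_edge l0 : (l0 == z) || (l0 == z') ->
  determined_at G l0 -> determined_at G' (ch (nv' V) d).
Proof.
move=> l0_zz' detG r a b ha hb agr.
have old_eq : old_att a = old_att b.
  apply: detG (old_adm ha) (old_adm hb) _ => s fs n0 n1.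
  have [nz nz'] : z != s /\ z' != s.
    by case/orP: l0_zz' => /eqP e; subst l0; rewrite ?dz ?dz' in n1; split; rewrite eq_sym.
  rewrite -!slot_mom_liftS; apply: agr; first by rewrite free_liftS fs nz.
    by slot_simpl.
  by rewrite dash_ch liftS_eq eq_sym.
apply: (att_eq_old_nv wav_nv ha hb old_eq).
apply: (vertex_eq_parent_children c_lt3 ha hb).
  by rewrite (pendant_parent_nv ha) (pendant_parent_nv hb) old_eq.
move=> i hi ic; apply: agr; first by rewrite free_ch //= ic.
  by slot_simpl.
by rewrite dash_ch; slot_simpl.
Qed.

Lemma pendant_determined_lift l0 : l0 != z' ->
  determined_at G l0 -> determined_at G' (liftS l0).
Proof.
move=> nz'0 detG r a b ha hb agr.
have d0 : dash G' (liftS l0) = liftS (dash G l0) by rewrite dash_liftS (negbTE nz'0).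
have eq_nv' : a (nv' V) = b (nv' V).
  apply: (vertex_eq_children ha hb) => i hi; apply: agr; first by rewrite free_ch.
    by slot_simpl.
  by rewrite d0; slot_simpl.
have eq_nv : a (nv V) = b (nv V).
  apply: (vertex_eq_children ha hb) => i hi.
  have [->|ic] := eqVneq i c.
    by rewrite (pendant_child_nv ha) (pendant_child_nv hb) /mj eq_nv'.
  apply: agr; first by rewrite free_ch //= ic.
    by slot_simpl.
  by rewrite d0; slot_simpl.
have old_eq : old_att a = old_att b.
  apply: detG (old_adm ha) (old_adm hb) _ => s fs n0 n1.
  have [<-|nz] := eqVneq z s.
    by rewrite -(pendant_parent_nv ha) -(pendant_parent_nv hb) /mj eq_nv.
  rewrite -!slot_mom_liftS; apply: agr; first by rewrite free_liftS fs nz.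
    by rewrite liftS_eq.
  by rewrite d0 liftS_eq.
exact: (att_eq_old_nv wav_nv ha hb old_eq eq_nv).
Qed.

Lemma pendant_determined : determined_by_free G -> determined_by_free G'.
Proof.
move=> [l0 fl0 detG]; have [l0_zz'|] := boolP ((l0 == z) || (l0 == z')).
  by exists (ch (nv' V) d); [rewrite free_ch|exact: pendant_determined_edge l0_zz' detG].
rewrite negb_or eq_sym => /andP [nz0 nz'0].
by exists (liftS l0); [rewrite free_liftS fl0|exact: pendant_determined_lift nz'0 detG].
Qed.

Lemma pendant_dash_matching : dash_matching G -> z != z' -> free G z' ->
  (forall b i, i < 3 -> free G' (ch (inr b) i) -> ch (inr b) i != ch (nv' V) d ->
     [/\ free G' (dash G' (ch (inr b) i)), dash G' (dash G' (ch (inr b) i)) = ch (inr b) i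
       & dash G' (ch (inr b) i) != ch (inr b) i]) ->
  dash_matching G'.
Proof.
move=> dG nzz' fz' inner t; case: (slot_liftS_or_ch t) => [[s ->]|[b [i [hi ->]]] hf].
  rewrite free_liftS => /andP [fs nzs]; have [f1 f2 f3] := dG _ fs.
  have [->|ne] := eqVneq s z'.
    by rewrite dash_liftS eqxx dash_ch free_ch //; split=> //; slot_simpl.
  rewrite dash_liftS (negbTE ne) dash_liftS free_liftS f1 f2 liftS_eq f3.
  have [e2|_] := eqVneq (dash G s) z'; first by move: nzs; rewrite -dz' -e2 f2 eqxx.
  by split=> //; apply: contra_neq ne => e; rewrite -f2 -e dz.
have [e|] := eqVneq (ch (inr b) i) (ch (nv' V) d); last exact: inner.
by rewrite e dash_ch dash_liftS eqxx free_liftS fz' nzz'; split=> //; slot_simpl.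
Qed.

End Pendant.

(* Insertions (IIs) and (IIIs): v and v' subdivide the solid edge above z,
   v' hanging from the child c of v. *)
Section Subdivision.
Variables (G : gdata V) (G' : gdata (V + bool)%type) (z : V) (c : nat).
Hypotheses (c_lt3 : c < 3) (par_nv : par G' (nv V) = liftS (par G z)).
Hypothesis wav_nv : wav G' (nv V) = nv' V.
Hypothesis old_adm : forall r x, tree_admissible G' r x -> tree_admissible G r (old_att x).
Hypothesis free_liftS : forall s, free G' (liftS s) = free G s.
Hypothesis free_ch : forall i, i < 3 -> i != c -> free G' (ch (nv V) i).
Hypothesis dash_liftS : forall s, dash G' (liftS s) = liftS (dash G s).

Lemma subdivision_dash_matching : dash_matching G ->
  (forall b i, i < 3 -> free G' (ch (inr b) i) ->
     [/\ free G' (dash G' (ch (inr b) i)), dash G' (dash G' (ch (inr b) i)) = ch (inr b) i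
       & dash G' (ch (inr b) i) != ch (inr b) i]) ->
  dash_matching G'.
Proof.
move=> dG inner t; case: (slot_liftS_or_ch t) => [[s ->]|[b [i [hi ->]]]]; last exact: inner.
rewrite free_liftS => fs; have [f1 f2 f3] := dG _ fs.
by rewrite !dash_liftS free_liftS f1 f2 liftS_eq.
Qed.

Lemma subdivision_determined : determined_by_free G -> determined_by_free G'.
Proof.
move=> [l0 fl0 detG].
exists (liftS l0) => [|r a b ha hb agr]; first by rewrite free_liftS.
have old_eq : old_att a = old_att b.
  apply: detG (old_adm ha) (old_adm hb) _ => s fs n0 n1.
  by rewrite -!slot_mom_liftS; apply: agr; rewrite ?free_liftS ?dash_liftS ?liftS_eq.
apply: (att_eq_old_nv wav_nv ha hb old_eq).
apply: (vertex_eq_parent_children c_lt3 ha hb).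
  have [[_ hpa _] [_ hpb _]] := (ha, hb).
  by have := hpa (nv V); have := hpb (nv V); rewrite par_nv !slot_mom_liftS old_eq /= => -> ->.
move=> i hi ic; apply: agr; first exact: free_ch.
  by slot_simpl.
by rewrite dash_liftS; slot_simpl.
Qed.

End Subdivision.

End Insertion.

Section InsertionI.
Variables (V : finType) (G : gdata V) (l : slot V) (o sw : bool) (P : prop8).
Hypotheses (dG : dash_matching G) (fl : free G l).
Let x := end1 G l o.
Let y := end2 G l o.
Let G' := insI G l o sw P.

Lemma insI_free_liftS s : free G' (liftS s) = [&& free G s, x != s & y != s].
Proof. by rewrite mkIns_free_liftS !liftS_eq. Qed.

Lemma insI_free_ch b i : i < 3 -> free G' (ch (inr b) i).
Proof. by move=> hi; rewrite mkIns_free_ch //; slot_simpl. Qed.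

Lemma insI_dash_liftS s : dash G' (liftS s) = liftS (dash G s).
Proof. by rewrite mkIns_dash_liftS //=; slot_simpl. Qed.

Lemma insI_dash_matching : dash_matching G'.
Proof.
have := dash_matching_ends o dG fl; rewrite -/x -/y => -[_ _ dx dy _].
move=> t; case: (slot_liftS_or_ch t) => [[s ->]|[b [i [hi ->]]]].
  rewrite insI_free_liftS => /and3P [fs nxs nys]; have [f1 f2 f3] := dG fs.
  rewrite !insI_dash_liftS f2 insI_free_liftS f1 liftS_eq; split=> //=.
  apply/andP; split; [apply: contra_neq nys|apply: contra_neq nxs] => e.
    by rewrite -dx e f2.
  by rewrite -dy e f2.
move=> _; rewrite /G' /insI /=.
by case: i hi => [|[|[|]]] // _; case: b; case: sw; rewrite /sig /=; slot_simpl;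
  split=> //; apply: insI_free_ch.
Qed.

Lemma insI_parent_new r a w : tree_admissible G' r a ->
  mj a (inr w) = slot_mom r (old_att a) (if w then y else x).
Proof.
by case=> _ hp _; case: w; rewrite -slot_mom_liftS; [exact: hp (nv' V)|exact: hp (nv V)].
Qed.

Lemma insI_determined_edge l0 : (l0 == x) || (l0 == y) ->
  determined_at G l0 -> determined_at G' (ch (nv V) 0).
Proof.
move=> l0_xy detG r a b ha hb agr.
have := dash_matching_ends o dG fl; rewrite -/x -/y => -[_ _ dx dy _].
have d0 : dash G' (ch (nv V) 0) = ch (nv' V) 0 by rewrite /G' /insI /=; slot_simpl.
have old_eq : old_att a = old_att b.
  apply: detG (mkIns_old_tree_admissible ha) (mkIns_old_tree_admissible hb) _ => s fs n0 n1.
  have [nx ny] : x != s /\ y != s.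
    by case/orP: l0_xy => /eqP e; subst l0; rewrite ?dx ?dy in n1; split; rewrite eq_sym.
  by rewrite -!slot_mom_liftS; apply: agr; rewrite ?insI_free_liftS ?fs ?nx ?ny ?d0; slot_simpl.
apply: (att_eq_old_nv _ ha hb old_eq) => //.
apply: (vertex_eq_parent_children (c := 0) _ ha hb) => //.
  by rewrite (insI_parent_new false ha) (insI_parent_new false hb) old_eq.
move=> i hi i0; apply: agr; first exact: insI_free_ch.
  by slot_simpl.
by rewrite d0; slot_simpl.
Qed.

Lemma insI_determined_lift l0 : determined_at G l0 -> determined_at G' (liftS l0).
Proof.
move=> detG r a b ha hb agr.
have new_eq w : a (inr w) = b (inr w).
  apply: (vertex_eq_children ha hb) => i hi; apply: agr; first exact: insI_free_ch.
    by slot_simpl.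
  by rewrite insI_dash_liftS; slot_simpl.
have old_eq : old_att a = old_att b.
  apply: detG (mkIns_old_tree_admissible ha) (mkIns_old_tree_admissible hb) _ => s fs n0 n1.
  have [<-|nx] := eqVneq x s.
    by rewrite -(insI_parent_new false ha) -(insI_parent_new false hb) /mj new_eq.
  have [<-|ny] := eqVneq y s.
    by rewrite -(insI_parent_new true ha) -(insI_parent_new true hb) /mj new_eq.
  rewrite -!slot_mom_liftS; apply: agr; first by rewrite insI_free_liftS fs nx ny.
    by rewrite liftS_eq.
  by rewrite insI_dash_liftS liftS_eq.
exact: (att_eq_old_nv _ ha hb old_eq (new_eq false)).
Qed.

Lemma insI_determined : determined_by_free G -> determined_by_free G'.
Proof.
move=> [l0 fl0 detG]; have [l0_xy|l0_other] := boolP ((l0 == x) || (l0 == y)).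
  by exists (ch (nv V) 0); [exact: insI_free_ch|exact: insI_determined_edge l0_xy detG].
exists (liftS l0); last exact: insI_determined_lift.
by rewrite insI_free_liftS fl0 !(eq_sym _ l0) -negb_or l0_other.
Qed.

End InsertionI.

Section InsertionII.
Variables (V : finType) (G : gdata V) (l : slot V) (o sw : bool) (P : prop8).
Hypotheses (dG : dash_matching G) (fl : free G l).
Let z := end1 G l o.
Let z' := end2 G l o.
Let G' := insII G l o sw P.

Lemma insII_free_liftS s : free G' (liftS s) = free G s && (z != s).
Proof. by rewrite mkIns_free_liftS !liftS_eq; slot_simpl; rewrite andbT. Qed.

Lemma insII_free_ch b i : i < 3 -> free G' (ch (inr b) i) = ~~ (~~ b && (i == 0)).
Proof.
by move=> hi; rewrite mkIns_free_ch //; slot_simpl; case: b; rewrite /= ?andbT // eq_sym.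
Qed.

Lemma insII_dash_liftS s :
  dash G' (liftS s) = if s == z' then ch (nv' V) 0 else liftS (dash G s).
Proof.
rewrite /G' /insII /=; have [->|ne] := eqVneq s z'; first by slot_simpl; rewrite eqxx.
by slot_simpl; rewrite (negbTE ne); case: (s) ne => [b|[u c]].
Qed.

Lemma insII_old_tree_admissible r x :
  tree_admissible G' r x -> tree_admissible G r (old_att x).
Proof. exact: mkIns_old_tree_admissible. Qed.

Lemma insII_dash_matching : dash_matching G'.
Proof.
have [_ fz' dz dz' nzz'] := dash_matching_ends o dG fl.
apply: (pendant_dash_matching (c := 0) _ dz dz' insII_free_liftS insII_free_ch
  insII_dash_liftS _ dG nzz' fz') => //; first by rewrite /G' /= eqxx.
move=> b i hi; rewrite insII_free_ch //; rewrite /G' /insII /=.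
by case: i hi => [|[|[|]]] // _; case: b; case: sw; rewrite /sig /= ?subSS ?subn0;
  slot_simpl; slot_simpl; rewrite ?mkIns_free_ch //; slot_simpl.
Qed.

Lemma insII_determined : determined_by_free G -> determined_by_free G'.
Proof.
have [_ _ dz dz' _] := dash_matching_ends o dG fl.
apply: (pendant_determined _ _ dz dz' _ _ _ insII_old_tree_admissible
  insII_free_liftS insII_free_ch insII_dash_liftS) => //.
by rewrite /G' /= eqxx.
Qed.

End InsertionII.

Section InsertionIII.
Variables (V : finType) (G : gdata V) (l : slot V) (o ab cb : bool) (P : prop8).
Hypotheses (dG : dash_matching G) (fl : free G l).
Let z := end1 G l o.
Let z' := end2 G l o.
Let G' := insIII G l o ab cb P.

Lemma insIII_free_liftS s : free G' (liftS s) = free G s && (z != s).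
Proof. by rewrite mkIns_free_liftS !liftS_eq; case: ab; slot_simpl; rewrite andbT. Qed.

Lemma insIII_free_ch b i : i < 3 -> free G' (ch (inr b) i) = ~~ (~~ b && (i == cA ab)).
Proof.
by move=> hi; rewrite mkIns_free_ch //; case: ab; slot_simpl; case: b; rewrite /= ?andbT // eq_sym.
Qed.

Lemma insIII_dash_liftS s :
  dash G' (liftS s) = if s == z' then ch (nv' V) (cB cb) else liftS (dash G s).
Proof.
rewrite /G' /insIII /=; have [->|ne] := eqVneq s z'.
  by case: ab; case: cb; slot_simpl; rewrite eqxx.
by case: ab; case: cb; slot_simpl; rewrite (negbTE ne); case: (s) ne => [b|[u c]].
Qed.

Lemma insIII_dash_ch : dash G' (ch (nv' V) (cB cb)) = liftS z'.
Proof. by rewrite /G' /insIII /=; case: ab; case: cb; slot_simpl. Qed.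

Lemma insIII_old_tree_admissible r x :
  tree_admissible G' r x -> tree_admissible G r (old_att x).
Proof. exact: mkIns_old_tree_admissible. Qed.

Lemma insIII_dash_matching : dash_matching G'.
Proof.
have [_ fz' dz dz' nzz'] := dash_matching_ends o dG fl.
apply: (pendant_dash_matching (c := cA ab) _ dz dz' insIII_free_liftS insIII_free_ch
  insIII_dash_liftS insIII_dash_ch dG nzz' fz'); first by case: cb.
move=> b i hi; rewrite insIII_free_ch //; rewrite /G' /insIII /=.
by case: i hi => [|[|[|]]] // _; case: b; case: ab; case: cb; rewrite /cA /cB /=;
  slot_simpl; slot_simpl; rewrite ?mkIns_free_ch //; slot_simpl.
Qed.

Lemma insIII_determined : determined_by_free G -> determined_by_free G'.
Proof.
have [_ _ dz dz' _] := dash_matching_ends o dG fl.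
apply: (pendant_determined _ _ dz dz' _ _ _ insIII_old_tree_admissible
  insIII_free_liftS insIII_free_ch insIII_dash_liftS insIII_dash_ch) => //.
- by case: ab.
- by case: cb.
Qed.

End InsertionIII.

Section InsertionIIs.
Variables (V : finType) (G : gdata V) (z : V) (sw : bool) (P : prop8).
Let G' := insIIs G z sw P.

Lemma insIIs_free_liftS s : free G' (liftS s) = free G s.
Proof. by apply: mkIns_moved_free_liftS => t; slot_simpl. Qed.

Lemma insIIs_free_ch b i : i < 3 -> free G' (ch (inr b) i) = (i != 0).
Proof.
move=> hi; rewrite /G' /insIIs mkIns_moved_free_ch //; try by move=> t; slot_simpl.
by slot_simpl; case: b => /=; rewrite ?andbT eq_sym.
Qed.

Lemma insIIs_dash_liftS s : dash G' (liftS s) = liftS (dash G s).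
Proof. by rewrite /G' /insIIs mkIns_dash_liftS //=; slot_simpl. Qed.

(* Momentum S' - j' = S - (S - j) = j flows from e_1(v) down to e_1(z). *)
Lemma insIIs_old_tree_admissible r x :
  tree_admissible G' r x -> tree_admissible G r (old_att x).
Proof.
rewrite /G' /insIIs => hx; apply: (mkIns_moved_old_tree_admissible hx).
case: hx => hb hp hP; have := hp (nv' V); have := hP (nv V).
rewrite /= !inordK // => /prop_holds_S.
by case: (hb (nv V)); rewrite /mom_end /mj /mS /=; lia.
Qed.

Lemma insIIs_dash_matching : dash_matching G -> dash_matching G'.
Proof.
move=> dG; apply: (subdivision_dash_matching insIIs_free_liftS insIIs_dash_liftS dG).
move=> b i hi; rewrite insIIs_free_ch // => hf.
have fr b' j : j < 3 -> j != 0 -> free G' (ch (inr b') j).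
  by move=> hj; rewrite insIIs_free_ch.
move: fr; rewrite /G' /insIIs /=.
by case: i hi hf => [|[|[|]]] // _ _ fr; case: b; case: sw; rewrite /sig /= ?subSS ?subn0;
  slot_simpl; split=> //; apply: fr.
Qed.

Lemma insIIs_determined : determined_by_free G -> determined_by_free G'.
Proof.
apply: (subdivision_determined (c := 0) _ _ _ insIIs_old_tree_admissible
  insIIs_free_liftS _ insIIs_dash_liftS) => // i hi i0.
by rewrite insIIs_free_ch.
Qed.

End InsertionIIs.

(* The only place where the leading propagator matters: it carries the
   momentum j of e_1(v) to the child of v' that becomes e_1(z). *)
Lemma leading_IIIs_parent P ab cc (t t' : nat * nat * nat) :
  leading P (joinsIIIs ab cc) -> prop_holds P t t' -> t.1.2 = end_mom t' (cA cc + 2).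
Proof.
move=> hl; have {hl} : all (fun e => bij P e.1 == e.2) (joinsIIIs ab cc).
  by apply/allP => -[a b] /hl /= ->.
case: t t' => [[s j] k] [[s' j'] k'].
by case: P; case: ab; case: cc => //= _ [e1 [e2 e3]]; lia.
Qed.

Section InsertionIIIs.
Variables (V : finType) (G : gdata V) (z : V) (ab cc : bool) (P : prop8).
Hypothesis lead : leading P (joinsIIIs ab cc).
Let G' := insIIIs G z ab cc P.

Lemma insIIIs_free_liftS s : free G' (liftS s) = free G s.
Proof. by apply: mkIns_moved_free_liftS => t; slot_simpl. Qed.

Lemma insIIIs_free_ch b i : i < 3 ->
  free G' (ch (inr b) i) = ~~ (b && (i == cA cc)) && ~~ (~~ b && (i == cA ab)).
Proof.
move=> hi; rewrite /G' /insIIIs mkIns_moved_free_ch //; try by move=> t; slot_simpl.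
by case: ab; case: cc; slot_simpl; case: b => /=; rewrite ?andbT ?andbF eq_sym.
Qed.

Lemma insIIIs_dash_liftS s : dash G' (liftS s) = liftS (dash G s).
Proof. by rewrite /G' /insIIIs mkIns_dash_liftS //=; case: ab; case: cc; slot_simpl. Qed.

Lemma insIIIs_old_tree_admissible r x :
  tree_admissible G' r x -> tree_admissible G r (old_att x).
Proof.
rewrite /G' /insIIIs => hx; apply: (mkIns_moved_old_tree_admissible hx).
case: hx => _ _ hP; have := hP (nv V); rewrite /= => /(leading_IIIs_parent lead).
by rewrite inordK ?mom_endE; [move=> <- | case: cc].
Qed.

Lemma insIIIs_dash_matching : dash_matching G -> dash_matching G'.
Proof.
move=> dG; apply: (subdivision_dash_matching insIIIs_free_liftS insIIIs_dash_liftS dG).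
move=> b i hi; rewrite insIIIs_free_ch // => hf.
have fr b' j : j < 3 -> ~~ (b' && (j == cA cc)) && ~~ (~~ b' && (j == cA ab)) ->
  free G' (ch (inr b') j) by move=> hj; rewrite insIIIs_free_ch.
move: hf fr; rewrite /G' /insIIIs /=.
by case: i hi => [|[|[|]]] // _; case: b; case: ab; case: cc; rewrite /cA /cB /= => // _ fr;
  slot_simpl; split=> //; apply: fr.
Qed.

Lemma insIIIs_determined : determined_by_free G -> determined_by_free G'.
Proof.
apply: (subdivision_determined (c := cA ab) _ _ _ insIIIs_old_tree_admissible
  insIIIs_free_liftS _ insIIIs_dash_liftS) => //; first by case: ab.
by move=> i hi ic; rewrite insIIIs_free_ch //= ic.
Qed.

End InsertionIIIs.

Lemma melonic_determined (V : finType) (G : gdata V) :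
  melonic G -> dash_matching G /\ determined_by_free G.
Proof.
elim=> {V G}.
- exact: (conj triv_dash_matching triv_determined).
- move=> V G l o sw P _ [dG hG] fl _.
  by split; [exact: insI_dash_matching|exact: insI_determined].
- move=> V G l o sw P _ [dG hG] fl _.
  by split; [exact: insII_dash_matching|exact: insII_determined].
- move=> V G l o ab cb P _ [dG hG] fl _.
  by split; [exact: insIII_dash_matching|exact: insIII_determined].
- move=> V G z sw P _ [dG hG] _.
  by split; [exact: insIIs_dash_matching|exact: insIIs_determined].
- move=> V G z ab cc P _ [dG hG] hl.
  by split; [exact: insIIIs_dash_matching|exact: insIIIs_determined].
- move=> V W G H f _ [dG hG] iso.
  by split; [exact: giso_dash_matching iso dG|exact: giso_determined iso hG].
Qed.

Section Leaves.
Variables (V : finType) (G : gdata V).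
Hypothesis hw : wf G.

Lemma wf_dash s : free G s ->
  [/\ free G (dash G s), slot_ty G (dash G s) = ~~ slot_ty G s & dash G (dash G s) = s].
Proof. by case: hw => _ _ _ h _; apply: h. Qed.

Lemma sum_antileaves (F : slot V -> nat) :
  \sum_(s | is_antileaf G s) F s = \sum_(s | is_leaf G s) F (dash G s).
Proof.
rewrite (reindex_onto (dash G) (dash G)) => [|s /andP [fs _]]; last by case: (wf_dash fs).
apply: eq_bigl => s; rewrite /is_antileaf /is_leaf.
have [fs|nfs] := boolP (free G s).
  by have [-> -> ->] := wf_dash fs; rewrite eqxx negbK andbT.
rewrite andFb; apply/negbTE; apply: contra nfs => /andP [/andP [fd _] /eqP dd].
by have [+ _ _] := wf_dash fd; rewrite dd.
Qed.

Lemma free_notin_par s : free G s = (s \notin [set par G v | v in V]).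
Proof.
apply/freeP/idP => [h|h v]; first by apply/imsetP => -[v _ e]; have := h v; rewrite e eqxx.
by apply/eqP => e; move/imsetP: h; apply; exists v.
Qed.

(* There are 3n + 2 slots, n of them internal, and the free ones are split
   evenly between leaves and anti-leaves by the dashed edges. *)
Lemma card_leaves : #|[pred s | is_leaf G s]| <= #|V|.+1.
Proof.
have par_inj : injective (par G) by case: hw.
have card_free : #|[pred s | free G s]| + #|V| = 2 + 3 * #|V|.
  have -> : #|[pred s | free G s]| = #|~: [set par G v | v in V]|.
    by apply: eq_card => s; rewrite !inE free_notin_par.
  have -> : 2 + 3 * #|V| = #|{: slot V}|.
    by rewrite card_sum card_prod card_bool card_ord mulnC.
  by rewrite -(cardsC [set par G v | v in V]) card_imset // addnC.
have split_free : #|[pred s | free G s]| =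
    #|[pred s | is_leaf G s]| + #|[pred s | is_antileaf G s]|.
  rewrite -!sum1_card (bigID (fun s => slot_ty G s)) /=.
  by congr (_ + _); apply: eq_bigl => s; rewrite !inE.
have anti : #|[pred s | is_antileaf G s]| = #|[pred s | is_leaf G s]|.
  by rewrite -!sum1_card; apply: sum_antileaves.
lia.
Qed.

(* Each true vertex receives momentum j from its parent and passes
   (S - j) + k + (S - k) >= j to its children, so the free slots carry at
   least the 2r entering through the root edges. *)
Lemma root_le_leaf_moms r x : admissible G r x ->
  r <= \sum_(s | is_leaf G s) slot_mom r x s.
Proof.
case=> hb hpar hleaf _.
have par_inj : injective (par G) by case: hw.
set F := slot_mom r x.
have all_slots :
  \sum_s F s = r + r + \sum_(v : V) \sum_(c : 'I_3) mom_end x v (val c + 2).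
  rewrite big_sumType /= big_bool /= pair_big /=.
  by congr (_ + _); apply: eq_bigr => -[v c].
have free_par : \sum_s F s = \sum_(s | free G s) F s + \sum_(v : V) mj x v.
  rewrite (bigID (fun s => free G s)) /=; congr (_ + _).
  rewrite (eq_bigl (mem [set par G v | v in V])) => [|s]; last by rewrite free_notin_par negbK.
  rewrite big_imset /= => [|u v _ _]; last exact: par_inj.
  by apply: eq_bigr => v _; rewrite /F -hpar.
have par_children :
  \sum_(v : V) mj x v <= \sum_(v : V) \sum_(c : 'I_3) mom_end x v (val c + 2).
  apply: leq_sum => v _; rewrite !big_ord_recl big_ord0 /=.
  by have := hb v; rewrite /bump /=; lia.
have leaf_anti : \sum_(s | free G s) F s =
    \sum_(s | is_leaf G s) F s + \sum_(s | is_antileaf G s) F s.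
  by rewrite (bigID (fun s => slot_ty G s)).
have anti_leaf : \sum_(s | is_antileaf G s) F s = \sum_(s | is_leaf G s) F s.
  by rewrite sum_antileaves; apply: eq_bigr => s ls; rewrite /F -hleaf.
lia.
Qed.

Lemma leaves_determine_admissible : determined_by_free G ->
  exists2 lam, is_leaf G lam & forall r x y, admissible G r x -> admissible G r y ->
    (forall s, is_leaf G s -> s != lam -> slot_mom r x s = slot_mom r y s) -> x = y.
Proof.
move=> [l0 fl0 det]; have [fd tyd dd] := wf_dash fl0.
pose lam := if slot_ty G l0 then l0 else dash G l0.
have lamE : (lam == l0) || (lam == dash G l0) by rewrite /lam; case: ifP; rewrite eqxx ?orbT.
have dlamE : (dash G lam == l0) || (dash G lam == dash G l0).
  by rewrite /lam; case: ifP; rewrite ?dd eqxx ?orbT.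
exists lam => [|r x y ax ay agr].
  by rewrite /lam /is_leaf; case: ifP => h; rewrite ?fl0 ?fd ?tyd ?h.
apply: det (admissible_tree ax) (admissible_tree ay) _ => s fs n0 n1.
have [ts|ts] := boolP (slot_ty G s).
  apply: agr; first by rewrite /is_leaf fs ts.
  by apply: contraNneq n0 => e; case/orP: lamE => /eqP e'; rewrite e e' ?eqxx // in n1 *.
have [f1 f2 f3] := wf_dash fs.
have ls : is_leaf G (dash G s) by rewrite /is_leaf f1 f2.
have [_ _ hx _] := ax; have [_ _ hy _] := ay.
rewrite -[in LHS]f3 -(hx _ ls) -[in RHS]f3 -(hy _ ls); apply: agr => //.
by apply/eqP => e; case/orP: dlamE; rewrite -e f3 => /eqP e'; rewrite e' eqxx in n0 n1.
Qed.

End Leaves.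

Local Open Scope ring_scope.

Lemma sum_geometric_le (R : realFieldType) (q : R) M : 0 <= q < 1 ->
  \sum_(m < M) q ^+ m <= (1 - q)^-1.
Proof.
case/andP => q0 q1; have nz : 1 - q != 0 by rewrite subr_eq0 eq_sym lt_eqF.
have tele : (1 - q) * \sum_(m < M) q ^+ m = 1 - q ^+ M.
  by rewrite -[1 - q]opprB mulNr -subrX1 opprB.
rewrite -[X in X <= _](mulKf nz) tele ler_piMr //; first by rewrite invr_ge0 subr_ge0 ltW.
by rewrite gerBl exprn_ge0.
Qed.

(* A sub-sum of the expansion of a product of truncated geometric series. *)
Lemma sum_prod_geometric_le (R : realFieldType) (T : finType) (D : pred T) (q : R)
    (t : seq {ffun T -> nat}) :
  0 <= q < 1 -> uniq t -> (forall v, v \in t -> forall u, ~~ D u -> v u = 0%N) ->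
  \sum_(v <- t) \prod_(u | D u) q ^+ v u <= (1 - q)^-1 ^+ #|D|.
Proof.
move=> hq ut supp; have /andP [q0 q1] := hq.
set M := (\max_(v <- t) \max_u v u).+1.
have ltM v u : v \in t -> (v u < M)%N.
  move=> vt; rewrite ltnS; apply: leq_trans (leq_bigmax_seq _ vt isT).
  exact: (leq_bigmax u).
pose trunc (v : {ffun T -> nat}) : {ffun T -> 'I_M} := [ffun u => inord (v u)].
have truncK v u : v \in t -> val (trunc v u) = v u.
  by move=> vt; rewrite ffunE /= inordK // ltM.
pose f u (m : 'I_M) : R := if D u then q ^+ m else (m == 0 :> nat)%:R.
have f_ge0 u m : 0 <= f u m by rewrite /f; case: (D u); rewrite ?exprn_ge0 ?ler0n.
pose F (w : {ffun T -> 'I_M}) := \prod_u f u (w u).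
have -> : \sum_(v <- t) \prod_(u | D u) q ^+ v u = \sum_(w <- map trunc t) F w.
  rewrite big_map; apply: eq_big_seq => v vt; rewrite big_mkcond; apply: eq_bigr => u _.
  by rewrite /f truncK //; case: ifP => // /negbT nd; rewrite supp.
have trunc_uniq : uniq (map trunc t).
  rewrite map_inj_in_uniq // => v v' vt v't e; apply/ffunP => u.
  by rewrite -(truncK v u vt) -(truncK v' u v't) e.
rewrite big_uniq //; apply: (@le_trans _ _ (\sum_w F w)).
  rewrite [X in _ <= X](bigID (mem (map trunc t))) /= lerDl.
  by apply: sumr_ge0 => w _; apply: prodr_ge0.
rewrite /F -bigA_distr_bigA /= -prodr_const [X in _ <= X]big_mkcond /=.
apply: ler_prod => u _; rewrite sumr_ge0 //= /f -[D u]/(u \in D).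
case: (u \in D); first exact: sum_geometric_le.
by rewrite big_ord_recl /= big1 ?addr0.
Qed.

Lemma pow_one_sub_sq_mul_le (R : realFieldType) (q : R) m n : 0 <= q < 1 -> (m <= n)%N ->
  (1 - q ^+ 2) ^+ n * (1 - q)^-1 ^+ m <= 2 ^+ n.
Proof.
case/andP=> q0 q1 mn; have qn : 1 - q != 0 by rewrite subr_eq0 eq_sym lt_eqF.
have iq0 : 0 <= (1 - q)^-1 by rewrite invr_ge0 subr_ge0 ltW.
apply: (@le_trans _ _ ((1 - q ^+ 2) ^+ m * (1 - q)^-1 ^+ m)).
  rewrite ler_wpM2r ?exprn_ge0 //; apply: ler_wiXn2l => //; last by rewrite gerBl exprn_ge0.
  by rewrite subr_ge0 exprn_ile1 // ltW.
have -> : 1 - q ^+ 2 = (1 - q) * (1 + q) by rewrite mulrDr mulr1 mulrBl mul1r addrA subrK.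
rewrite -exprMn mulrAC mulfV // mul1r; apply: (@le_trans _ _ (2 ^+ m)).
  by apply: lerXn2r; rewrite ?nnegrE ?addr_ge0 // -[2]/(1 + 1) lerD2l ltW.
by apply: ler_weXn2l; rewrite ?ler1n.
Qed.

Lemma powR_half (R : realType) (p : R) : 0 <= p ->
  (p `^ 2^-1) ^+ 2 = p /\ forall r : nat, p `^ (r%:R / 2) = (p `^ 2^-1) ^+ r.
Proof.
move=> p0; split=> [|r]; last by rewrite -powR_mulrn ?powR_ge0 // -powRrM mulrC.
by rewrite -powR_mulrn ?powR_ge0 // -powRrM mulVf ?pnatr_eq0 // powRr1.
Qed.

Section Amplitude.
Variables (R : realType) (p : R) (V : finType) (G : gdata V) (r : nat).
Hypotheses (hw : wf G) (hp : 0 < p < 1).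

Lemma weight_le (q : R) (D : pred (slot V)) x : 0 <= q <= 1 -> q ^+ 2 = p ->
  {subset D <= is_leaf G} -> admissible G r x ->
  weight p G r x <= q ^+ r * \prod_(s | D s) q ^+ slot_mom r x s.
Proof.
case/andP=> q0 q1 qp DL ax; rewrite /weight !prodrXr -exprD -qp -exprM.
apply: ler_wiXn2l => //; have := root_le_leaf_moms hw ax.
have : (\sum_(s | D s) slot_mom r x s <= \sum_(s | is_leaf G s) slot_mom r x s)%N.
  rewrite [X in (_ <= X)%N](bigID D) /=; apply: leq_trans (leq_addr _ _).
  by apply/eq_leq/eq_bigl => s; apply/esym/andb_idl => /DL.
lia.
Qed.

Lemma esum_weight_le (q : R) (D : pred (slot V)) : 0 <= q < 1 -> q ^+ 2 = p ->
  {subset D <= is_leaf G} ->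
  (forall x y, admissible G r x -> admissible G r y ->
     (forall s, D s -> slot_mom r x s = slot_mom r y s) -> x = y) ->
  (\esum_(x in [set x | admissible G r x]) (weight p G r x)%:E
     <= (q ^+ r * (1 - q)^-1 ^+ #|D|)%:E)%E.
Proof.
move=> /andP [q0 q1] qp DL inj; apply: ge_ereal_sup => _ [A [finA sub] <-].
rewrite fsbig_finite //= sumEFin lee_fin; set s := finmap.enum_fset _.
have adm x : x \in s -> admissible G r x.
  by move=> xs; apply: sub; apply/set_mem; rewrite -(in_fset_set finA x).
pose phi (x : att V) : {ffun slot V -> nat} := [ffun u => if D u then slot_mom r x u else 0%N].
apply: (@le_trans _ _ (\sum_(x <- s) q ^+ r * \prod_(u | D u) q ^+ phi x u)).
  rewrite big_seq_cond [X in _ <= X]big_seq_cond; apply: ler_sum => x /andP [/adm ax _].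
  rewrite (eq_bigr (fun u => q ^+ slot_mom r x u)) => [|u Du]; last by rewrite ffunE Du.
  by apply: weight_le; rewrite ?q0 ?ltW.
rewrite -mulr_sumr ler_wpM2l ?exprn_ge0 //.
rewrite -(big_map phi xpredT (fun v => \prod_(u | D u) q ^+ v u)).
apply: sum_prod_geometric_le; first by rewrite q0.
  rewrite map_inj_in_uniq ?finmap.fset_uniq // => x y xs ys e.
  apply: inj (adm x xs) (adm y ys) _ => u Du.
  by have := congr1 (fun f : {ffun slot V -> nat} => f u) e; rewrite !ffunE Du.
by move=> _ /mapP [x _ ->] u Du; rewrite ffunE (negbTE Du).
Qed.

Lemma amplitude_le : determined_by_free G ->
  (amplitude p G r <= ((2 : R) ^+ #|V| * p `^ (r%:R / 2))%:E)%E.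
Proof.
move=> det; case/andP: hp => p0 p1; set q := p `^ 2^-1.
have [qp pr] := powR_half (ltW p0).
have q0 : 0 <= q by apply: powR_ge0.
have q1 : q < 1 by rewrite ltNge; apply/negP => /(exprn_ege1 2); rewrite qp leNgt p1.
have [lam llam inj] := leaves_determine_admissible hw det.
pose D := [pred s | is_leaf G s && (s != lam)].
have cD : (#|D| <= #|V|)%N.
  by have := card_leaves hw; rewrite (cardD1x llam) add1n ltnS.
have DL : {subset D <= is_leaf G} by move=> s /andP [].
have eb := esum_weight_le (introT andP (conj q0 q1)) qp DL
  (fun x y ax ay e => inj r x y ax ay (fun s ls nl => e s (introT andP (conj ls nl)))).
rewrite /amplitude; apply: le_trans (lee_wpmul2l _ eb) _.
  by rewrite lee_fin exprVn invrK exprn_ge0 // subr_ge0 ltW.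
rewrite -EFinM lee_fin exprVn invrK pr mulrCA mulrC ler_wpM2r ?exprn_ge0 // -qp.
by apply: (pow_one_sub_sq_mul_le (q := q)) => //; rewrite q0 q1.
Qed.

End Amplitude.

Theorem lemma8 (R : realType) (p : R) (r n : nat) (G : gdata 'I_n) :
  0 < p < 1 -> ~~ odd n -> wf G -> heap G -> melonic G ->
  (amplitude p G r <= ((4 : R) ^+ n * p `^ (r%:R / 2))%:E)%E.
Proof.
move=> hp _ hw _ /melonic_determined [_ det].
apply: le_trans (amplitude_le r hw hp det) _.
rewrite card_ord lee_fin ler_wpM2r ?powR_ge0 //.
by apply: lerXn2r; rewrite ?nnegrE ?ler0n // ler_nat.
Qed.
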